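(* Let $d\in\mathbb{Z}_2$ with $d\equiv 3\pmod 4$ and consider $f(x)=x^2+x-d$ as a map $\mathbb{Z}_2\to\mathbb{Z}_2$. Then $f(2\mathbb{Z}_2)\subset 1+2\mathbb{Z}_2$, and $1+2\mathbb{Z}_2$ is the unique minimal component of $f$.
   Context: A minimal component of $f$ is a clopen set $E\subset\mathbb{Z}_2$ with $f(E)\subset E$ such that $f:E\to E$ is minimal (every orbit in $E$ is dense in $E$). *)

From Stdlib Require Import ZArith.
Open Scope Z_scope.

(* A 2-adic integer x = sum_i x_i 2^i, given by its binary digits. *)
Definition Z2 : Type := nat -> bool.

Fixpoint trunc (x : Z2) (n : nat) : Z :=
  match n with
  | O => 0
  | S m => trunc x m + (if x m then 2 ^ Z.of_nat m else 0)
  end.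

(* Ring operations: digit i of the result is digit i of the corresponding
   integer operation on the truncations mod 2^(i+1) (Z.testbit uses two's
   complement on negatives, which is exactly the 2-adic expansion). *)
Definition Z2_of_Z (z : Z) : Z2 := fun i => Z.testbit z (Z.of_nat i).
Definition Z2add (x y : Z2) : Z2 :=
  fun i => Z.testbit (trunc x (S i) + trunc y (S i)) (Z.of_nat i).
Definition Z2sub (x y : Z2) : Z2 :=
  fun i => Z.testbit (trunc x (S i) - trunc y (S i)) (Z.of_nat i).
Definition Z2mul (x y : Z2) : Z2 :=
  fun i => Z.testbit (trunc x (S i) * trunc y (S i)) (Z.of_nat i).

Definition fd (d : Z2) (x : Z2) : Z2 := Z2sub (Z2add (Z2mul x x) x) d.

(* Topology of Z_2: the balls x + 2^n Z_2 (agreement of first n digits). *)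
Definition agree (n : nat) (x y : Z2) : Prop := forall i, (i < n)%nat -> x i = y i.

Definition Z2open (U : Z2 -> Prop) : Prop :=
  forall x, U x -> exists n, forall y, agree n x y -> U y.
Definition Z2closed (U : Z2 -> Prop) : Prop := Z2open (fun x => ~ U x).
Definition Z2clopen (U : Z2 -> Prop) : Prop := Z2open U /\ Z2closed U.

Fixpoint iter (f : Z2 -> Z2) (k : nat) (x : Z2) : Z2 :=
  match k with O => x | S k' => f (iter f k' x) end.

Definition orbit_dense_in (f : Z2 -> Z2) (x : Z2) (E : Z2 -> Prop) : Prop :=
  forall y, E y -> forall n, exists k, E (iter f k x) /\ agree n (iter f k x) y.

Definition minimal_component (f : Z2 -> Z2) (E : Z2 -> Prop) : Prop :=
  Z2clopen E /\ (exists x, E x) /\ (forall x, E x -> E (f x)) /\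
  (forall x, E x -> orbit_dense_in f x E).

Definition twoZ2 (x : Z2) : Prop := x O = false.
Definition onePlusTwoZ2 (x : Z2) : Prop := x O = true.

From Pilot Require Import Defs.
From Stdlib Require Import ZArith Lia Classical.
Open Scope Z_scope.

(* Reduced modulo [2^N], [f] maps odd residues to odd residues, and
   [f (z + t) = f z + t (2z + 1 + t)] shows that a shift by an even [t] is multiplied by an
   odd factor, and a shift by a multiple of 4 by a factor congruent to 1 modulo 4 after two
   steps.  Since [d] is 3 modulo 4, [f z - z = z^2 - d] is 2 modulo 4 for odd [z]; inducting
   with these facts, [f^(2^m)] moves every odd residue by an odd multiple of [2^(m+1)], which
   forces [f] to permute the odd residues modulo [2^N] in a single cycle.  So every orbit in
   [1 + 2Z_2] is dense in it.  A minimal component [E] is then contained in [1 + 2Z_2], as it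
   is the closure of the orbit of [f x] for any [x] in [E], and contains it, as [E] is closed
   and contains such an orbit. *)

Lemma pow2_pos n : 0 < 2 ^ Z.of_nat n.
Proof. apply Z.pow_pos_nonneg; lia. Qed.

Lemma pow2_succ n : 2 ^ Z.of_nat (S n) = 2 * 2 ^ Z.of_nat n.
Proof. rewrite Nat2Z.inj_succ, Z.pow_succ_r by lia. ring. Qed.

Definition fZ (D z : Z) : Z := z * z + z - D.

Lemma fZ_shift D z t : fZ D (z + t) = fZ D z + t * (2 * z + 1 + t).
Proof. unfold fZ; ring. Qed.

Lemma iter_fZ_shift2 D j z s : exists r,
  Nat.iter j (fZ D) (z + 2 * s) = Nat.iter j (fZ D) z + 2 * s * (2 * r + 1).
Proof.
  induction j as [|j [r IH]].
  - exists 0; cbn [Nat.iter nat_rect]; ring.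
  - rewrite !Nat.iter_succ.
    set (w := Nat.iter j (fZ D) z) in *.
    rewrite IH, fZ_shift.
    exists (r + (2 * r + 1) * (w + s * (2 * r + 1))); ring.
Qed.

Section OddConstant.

Variable D : Z.
Hypothesis HD : D mod 4 = 3.

Let D_eq : D = 4 * (D / 4) + 3.
Proof. pose proof (Z.div_mod D 4); lia. Qed.

Lemma fZ_odd z : Z.Odd z -> Z.Odd (fZ D z).
Proof.
  intros [a ->]. rewrite D_eq.
  exists (2 * a * a + 3 * a - 2 * (D / 4) - 1); unfold fZ; ring.
Qed.

Lemma iter_fZ_odd k z : Z.Odd z -> Z.Odd (Nat.iter k (fZ D) z).
Proof. intros Hz; induction k; rewrite ?Nat.iter_succ; auto using fZ_odd. Qed.

(* On odd points, one step of f moves by [z^2 - D], which is [-4 (D/4) - 2] modulo 8. *)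
Lemma fZ_displacement_odd z : Z.Odd z -> exists c, fZ D z = z + 8 * c - 4 * (D / 4) - 2.
Proof.
  intros [a ->].
  destruct (Z.Even_or_Odd a) as [[b ->]|[b ->]];
    [exists (b * (2 * b + 1)) | exists ((2 * b + 1) * (b + 1))];
    unfold fZ; rewrite D_eq at 1; ring.
Qed.

Lemma fZ_shift4 z s : Z.Odd z -> exists r, fZ D (z + 4 * s) = fZ D z + 4 * s * (4 * r + 3).
Proof. intros [a ->]. exists (a + s). rewrite fZ_shift; ring. Qed.

Lemma iter_fZ_shift4 k z s : Z.Odd z -> exists r,
  Nat.iter (2 * k) (fZ D) (z + 4 * s) = Nat.iter (2 * k) (fZ D) z + 4 * s * (4 * r + 1).
Proof.
  intros Hz. induction k as [|k [r IH]].
  - exists 0; cbn; ring.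
  - replace (2 * S k)%nat with (S (S (2 * k))) by lia. rewrite !Nat.iter_succ, IH.
    set (w := Nat.iter (2 * k) (fZ D) z).
    assert (Hw : Z.Odd w) by apply iter_fZ_odd, Hz.
    set (s1 := s * (4 * r + 1)).
    destruct (fZ_shift4 w s1 Hw) as [r1 E1].
    replace (4 * s * (4 * r + 1)) with (4 * s1) by (unfold s1; ring). rewrite E1.
    set (s2 := s1 * (4 * r1 + 3)).
    destruct (fZ_shift4 (fZ D w) s2 (fZ_odd w Hw)) as [r2 E2].
    replace (4 * s1 * (4 * r1 + 3)) with (4 * s2) by (unfold s2; ring). rewrite E2.
    set (c := 4 * r1 * r2 + 3 * r1 + 3 * r2 + 2).
    exists (4 * r * c + r + c). unfold s2, s1, c; ring.
Qed.

Lemma iter2_fZ_displacement z : Z.Odd z -> exists h, Nat.iter 2 (fZ D) z = z + 4 * (2 * h + 1).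
Proof.
  intros Hz. change (Nat.iter 2 (fZ D) z) with (fZ D (fZ D z)).
  destruct (fZ_displacement_odd z Hz) as [c Ec].
  destruct (fZ_displacement_odd (fZ D z) (fZ_odd z Hz)) as [c' Ec'].
  rewrite Ec', Ec. exists (c + c' - D / 4 - 1); ring.
Qed.

Lemma iter_pow2_fZ_displacement m z : Z.Odd z ->
  exists h, Nat.iter (2 ^ m) (fZ D) z = z + 2 ^ Z.of_nat (S m) * (2 * h + 1).
Proof.
  destruct m as [|m].
  - intros Hz. destruct (fZ_displacement_odd z Hz) as [c Ec].
    change (Nat.iter (2 ^ 0) (fZ D) z) with (fZ D z). change (2 ^ Z.of_nat 1) with 2.
    exists (2 * c - D / 4 - 1). rewrite Ec; ring.
  - revert z; induction m as [|m IH]; intros z Hz.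
    + exact (iter2_fZ_displacement z Hz).
    + destruct (IH z Hz) as [h Hh].
      replace (2 ^ S (S m))%nat with (2 ^ S m + 2 ^ S m)%nat
        by (rewrite (Nat.pow_succ_r' 2 (S m)); lia).
      rewrite Nat.iter_add, Hh.
      replace (z + 2 ^ Z.of_nat (S (S m)) * (2 * h + 1))
        with (z + 4 * (2 ^ Z.of_nat m * (2 * h + 1))) by (rewrite !pow2_succ; ring).
      rewrite Nat.pow_succ_r'.
      destruct (iter_fZ_shift4 (2 ^ m) z (2 ^ Z.of_nat m * (2 * h + 1)) Hz) as [r Hr].
      rewrite Hr, <- Nat.pow_succ_r', Hh.
      exists (2 * h * r + h + r). rewrite !pow2_succ; ring.
Qed.

(* If [f^k z = w + 2^N e] with [e] odd, then [2^(N-1)] further steps move [w] by an odd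
   multiple of [2^N] and multiply the error [2^N e] by an odd number, so the two odd
   multiples of [2^N] add up to a multiple of [2^(N+1)]. *)
Lemma iter_fZ_hits_mod_pow2 M z w : Z.Odd z -> Z.Odd w ->
  exists k e, Nat.iter k (fZ D) z = w + 2 ^ Z.of_nat (S M) * e.
Proof.
  intros [a ->] Hw. induction M as [|M [k [e He]]].
  - destruct Hw as [b ->]. exists O, (a - b).
    cbn [Nat.iter nat_rect]. change (2 ^ Z.of_nat 1) with 2; ring.
  - destruct (Z.Even_or_Odd e) as [[e' ->]|[e' ->]].
    + exists k, e'. rewrite He, (pow2_succ (S M)); ring.
    + destruct (iter_pow2_fZ_displacement M w Hw) as [h Hh].
      destruct (iter_fZ_shift2 D (2 ^ M) w (2 ^ Z.of_nat M * (2 * e' + 1))) as [r Hr].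
      exists (2 ^ M + k)%nat, (h + 1 + 2 * e' * r + e' + r).
      rewrite Nat.iter_add, He.
      replace (w + 2 ^ Z.of_nat (S M) * (2 * e' + 1))
        with (w + 2 * (2 ^ Z.of_nat M * (2 * e' + 1))) by (rewrite pow2_succ; ring).
      rewrite Hr, Hh, !pow2_succ; ring.
Qed.

End OddConstant.

Lemma trunc_succ x n : trunc x (S n) = trunc x n + (if x n then 1 else 0) * 2 ^ Z.of_nat n.
Proof. simpl; destruct (x n); ring. Qed.

Lemma trunc_bounds x n : 0 <= trunc x n < 2 ^ Z.of_nat n.
Proof.
  induction n as [|n IH]; [simpl; lia|].
  rewrite trunc_succ, pow2_succ. destruct (x n); lia.
Qed.

Lemma trunc_testbit x n i : (i < n)%nat -> Z.testbit (trunc x n) (Z.of_nat i) = x i.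
Proof.
  induction n as [|n IH]; intros Hi; [lia|].
  pose proof (trunc_bounds x n) as Hb.
  rewrite trunc_succ.
  destruct (Nat.lt_ge_cases i n) as [Hlt|Hge].
  - rewrite <- (Z.mod_pow2_bits_low _ (Z.of_nat n)) by lia.
    rewrite Z_mod_plus_full, Z.mod_small by lia. auto.
  - replace i with n by lia.
    rewrite <- (Z.add_0_l (Z.of_nat n)), <- Z.div_pow2_bits by lia.
    rewrite Z.div_add, Z.div_small by (pose proof (pow2_pos n); lia).
    destruct (x n); reflexivity.
Qed.

Lemma trunc_eq_mod_pow2 x n W :
  (forall i, (i < n)%nat -> x i = Z.testbit W (Z.of_nat i)) -> trunc x n = W mod 2 ^ Z.of_nat n.
Proof.
  intros Hx. rewrite <- (Z.mod_small (trunc x n) (2 ^ Z.of_nat n)) by apply trunc_bounds.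
  apply Z.bits_inj'. intros i Hi.
  destruct (Z_lt_le_dec i (Z.of_nat n)).
  - rewrite !Z.mod_pow2_bits_low by lia.
    replace i with (Z.of_nat (Z.to_nat i)) by lia.
    rewrite trunc_testbit by lia. apply Hx; lia.
  - rewrite !Z.mod_pow2_bits_high by lia. reflexivity.
Qed.

Lemma trunc_mod_pow2 x n m : (m <= n)%nat -> trunc x n mod 2 ^ Z.of_nat m = trunc x m.
Proof.
  intros Hmn. symmetry. apply trunc_eq_mod_pow2. intros i Hi.
  symmetry; apply trunc_testbit; lia.
Qed.

Lemma agree_of_trunc_eq n x y : trunc x n = trunc y n -> agree n x y.
Proof.
  intros H i Hi. rewrite <- (trunc_testbit x n i Hi), <- (trunc_testbit y n i Hi), H.
  reflexivity.
Qed.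

Lemma testbit_eqm_pow2 a b i :
  a mod 2 ^ Z.of_nat (S i) = b mod 2 ^ Z.of_nat (S i) ->
  Z.testbit a (Z.of_nat i) = Z.testbit b (Z.of_nat i).
Proof.
  intros H. rewrite <- (Z.mod_pow2_bits_low a (Z.of_nat (S i))) by lia.
  rewrite <- (Z.mod_pow2_bits_low b (Z.of_nat (S i))) by lia. now rewrite H.
Qed.

Lemma pow2_neq0 n : 2 ^ Z.of_nat n <> 0.
Proof. pose proof (pow2_pos n); lia. Qed.

Section TruncBinop.

Variable op : Z -> Z -> Z.
Hypothesis op_mod : forall a b M, M <> 0 -> op (a mod M) (b mod M) mod M = op a b mod M.

Lemma trunc_binop x y n :
  trunc (fun i => Z.testbit (op (trunc x (S i)) (trunc y (S i))) (Z.of_nat i)) n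
  = op (trunc x n) (trunc y n) mod 2 ^ Z.of_nat n.
Proof.
  apply trunc_eq_mod_pow2. intros i Hi. apply testbit_eqm_pow2.
  rewrite <- (trunc_mod_pow2 x n (S i)), <- (trunc_mod_pow2 y n (S i)) by lia.
  rewrite op_mod by apply pow2_neq0. reflexivity.
Qed.

End TruncBinop.

Lemma trunc_Z2add x y n : trunc (Z2add x y) n = (trunc x n + trunc y n) mod 2 ^ Z.of_nat n.
Proof. apply (trunc_binop Z.add). intros; symmetry; apply Z.add_mod; assumption. Qed.

Lemma trunc_Z2sub x y n : trunc (Z2sub x y) n = (trunc x n - trunc y n) mod 2 ^ Z.of_nat n.
Proof.
  apply (trunc_binop Z.sub). intros.
  rewrite Zminus_mod_idemp_l, Zminus_mod_idemp_r; reflexivity.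
Qed.

Lemma trunc_Z2mul x y n : trunc (Z2mul x y) n = (trunc x n * trunc y n) mod 2 ^ Z.of_nat n.
Proof. apply (trunc_binop Z.mul). intros; symmetry; apply Z.mul_mod; assumption. Qed.

Lemma fZ_mod D z M : M <> 0 -> fZ D (z mod M) mod M = fZ D z mod M.
Proof.
  intros HM. unfold fZ.
  rewrite Zminus_mod, Z.add_mod, Z.mul_mod by assumption.
  rewrite Z.mod_mod by assumption.
  rewrite <- Z.mul_mod, <- Z.add_mod, <- Zminus_mod by assumption. reflexivity.
Qed.

Lemma trunc_fd d x n : trunc (fd d x) n = fZ (trunc d n) (trunc x n) mod 2 ^ Z.of_nat n.
Proof.
  unfold fd, fZ. rewrite trunc_Z2sub, trunc_Z2add, trunc_Z2mul.
  rewrite Zplus_mod_idemp_l, Zminus_mod_idemp_l. reflexivity.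
Qed.

Lemma trunc_iter_fd d x n k :
  trunc (Defs.iter (fd d) k x) n = Nat.iter k (fZ (trunc d n)) (trunc x n) mod 2 ^ Z.of_nat n.
Proof.
  induction k as [|k IH]; simpl Defs.iter; rewrite ?Nat.iter_succ.
  - symmetry; apply Z.mod_small, trunc_bounds.
  - rewrite trunc_fd, IH, fZ_mod by apply pow2_neq0. reflexivity.
Qed.

Lemma iter_invariant (f : Z2 -> Z2) (P : Z2 -> Prop) :
  (forall x, P x -> P (f x)) -> forall k x, P x -> P (Defs.iter f k x).
Proof. intros Hf k x Hx; induction k; simpl; auto. Qed.

Lemma trunc_Odd x n : (1 <= n)%nat -> onePlusTwoZ2 x -> Z.Odd (trunc x n).
Proof.
  intros Hn Hx. apply Z.odd_spec. rewrite <- Z.bit0_odd.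
  change 0 with (Z.of_nat 0). rewrite trunc_testbit by lia. exact Hx.
Qed.

Lemma onePlusTwoZ2_clopen : Z2clopen onePlusTwoZ2.
Proof.
  unfold onePlusTwoZ2; split; intros x Hx; exists 1%nat; intros y Hy;
    rewrite <- (Hy O) by lia; exact Hx.
Qed.

Section Quadratic.

Variable d : Z2.
Hypothesis hd : trunc d 2 = 3.

Lemma fd_onePlusTwoZ2 x : onePlusTwoZ2 (fd d x).
Proof.
  unfold onePlusTwoZ2. rewrite <- (trunc_testbit (fd d x) 1 0) by lia.
  rewrite trunc_fd, <- (trunc_mod_pow2 d 2 1), hd by lia.
  simpl; destruct (x O); reflexivity.
Qed.

Lemma fd_orbit_approx x y n : onePlusTwoZ2 x -> onePlusTwoZ2 y ->
  exists k, agree n (Defs.iter (fd d) k x) y.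
Proof.
  intros Hx Hy.
  assert (HD : trunc d (S (S n)) mod 4 = 3)
    by (change 4 with (2 ^ Z.of_nat 2); rewrite trunc_mod_pow2 by lia; exact hd).
  destruct (iter_fZ_hits_mod_pow2 _ HD (S n) _ _ (trunc_Odd x (S (S n)) ltac:(lia) Hx)
              (trunc_Odd y (S (S n)) ltac:(lia) Hy)) as [k [e He]].
  exists k. intros i Hi. apply (agree_of_trunc_eq (S (S n))); [|lia].
  rewrite trunc_iter_fd, He, Z.mul_comm, Z_mod_plus_full.
  apply Z.mod_small, trunc_bounds.
Qed.

Lemma minimal_component_onePlusTwoZ2 : minimal_component (fd d) onePlusTwoZ2.
Proof.
  split; [apply onePlusTwoZ2_clopen|split; [|split]].
  - exists (fun _ => true); reflexivity.
  - intros x _; apply fd_onePlusTwoZ2.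
  - intros x Hx y Hy n. destruct (fd_orbit_approx x y n Hx Hy) as [k Hk].
    exists k; split; [|exact Hk].
    apply iter_invariant; auto using fd_onePlusTwoZ2.
Qed.

Lemma minimal_component_sub_onePlusTwoZ2 E x :
  minimal_component (fd d) E -> E x -> onePlusTwoZ2 x.
Proof.
  intros [_ [_ [Einv Edense]]] Hx.
  destruct (Edense (fd d x) (Einv x Hx) x Hx 1%nat) as [k [_ Hk]].
  change (x O = true). rewrite <- (Hk O) by lia.
  apply (iter_invariant _ onePlusTwoZ2); auto using fd_onePlusTwoZ2.
Qed.

Lemma onePlusTwoZ2_sub_minimal_component E x :
  minimal_component (fd d) E -> onePlusTwoZ2 x -> E x.
Proof.
  intros [[_ Eclosed] [[x0 Hx0] [Einv _]]] Hx.
  apply NNPP; intros HnE.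
  destruct (Eclosed x HnE) as [n Hn].
  destruct (fd_orbit_approx (fd d x0) x n (fd_onePlusTwoZ2 x0) Hx) as [k Hk].
  apply (Hn (Defs.iter (fd d) k (fd d x0))).
  - intros i Hi; symmetry; apply Hk, Hi.
  - apply iter_invariant; auto.
Qed.

End Quadratic.

Theorem theoremF (d : Z2) (hd : trunc d 2 = 3%Z) :
  (forall x, twoZ2 x -> onePlusTwoZ2 (fd d x)) /\
  minimal_component (fd d) onePlusTwoZ2 /\
  (forall E, minimal_component (fd d) E -> forall x, E x <-> onePlusTwoZ2 x).
Proof.
  split; [|split].
  - intros x _; apply fd_onePlusTwoZ2, hd.
  - apply minimal_component_onePlusTwoZ2, hd.
  - intros E HE x; split.
    + exact (minimal_component_sub_onePlusTwoZ2 d hd E x HE).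
    + exact (onePlusTwoZ2_sub_minimal_component d hd E x HE).
Qed.
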